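(* Let $\mathbf A\in\mathbb C^{m\times n}$ with $\operatorname{rank}\mathbf A=r$, where $r<\min\{m,n\}$ or $r=n<m$. Then the projection matrix $\mathbf Q=\mathbf A\mathbf A^{+}\in\mathbb C^{m\times m}$ has entries \[ (\mathbf Q)_{ij}=\frac{q_{ij}}{d_r(\mathbf A\mathbf A^{*})},\qquad q_{ij}=\sum_{\alpha\in I_{r,m}\{j\}}\left|\left((\mathbf A\mathbf A^{*})_{j.}(\mathbf g_{i.})\right)^{\alpha}_{\alpha}\right|,\quad i,j=1,\dots,m,\] where $\mathbf g_{i.}$ is the $i$-th row of $\mathbf A\mathbf A^{*}$.
   Context: $\mathbf A^{+}$ is the Moore–Penrose inverse (unique $\mathbf X$ with $\mathbf A\mathbf X\mathbf A=\mathbf A$, $\mathbf X\mathbf A\mathbf X=\mathbf X$, $(\mathbf A\mathbf X)^{*}=\mathbf A\mathbf X$, $(\mathbf X\mathbf A)^{*}=\mathbf X\mathbf A$). $\mathbf M_{j.}(\mathbf c)$ denotes $\mathbf M$ with its $j$-th row replaced by the row vector $\mathbf c$. $I_{r,m}$ is the set of strictly increasing sequences of $r$ elements of $\{1,\dots,m\}$, $I_{r,m}\{j\}=\{\alpha\in I_{r,m}:j\in\alpha\}$, $\mathbf M^{\alpha}_{\alpha}$ is the principal submatrix indexed by $\alpha$, $|\cdot|$ is the determinant, and $d_r(\mathbf M)=\sum_{\alpha\in I_{r,m}}|\mathbf M^{\alpha}_{\alpha}|$. *)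

(* Scalars: any numClosedFieldType C (algebraically closed
   field with conjugation, e.g. complex R for R : realType = C). *)
From HB Require Import structures.
From mathcomp Require Import all_boot all_order all_algebra.
Set Implicit Arguments. Unset Strict Implicit. Unset Printing Implicit Defensive.
Import Order.TTheory GRing.Theory Num.Theory.
Local Open Scope ring_scope.

Section Defs.
Variable C : numClosedFieldType.

Definition conjT (m n : nat) (A : 'M[C]_(m, n)) : 'M[C]_(n, m) :=
  (map_mx (fun x => x^*) A)^T.

Definition is_MP_inverse (m n : nat) (A : 'M[C]_(m, n)) (X : 'M[C]_(n, m)) : Prop :=
  [/\ A *m X *m A = A, X *m A *m X = X,
      conjT (A *m X) = A *m X & conjT (X *m A) = X *m A].

Definition row_repl (m n : nat) (M : 'M[C]_(m, n)) (j : 'I_m) (c : 'rV[C]_n)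
  : 'M[C]_(m, n) :=
  \matrix_(k, l) if k == j then c 0 l else M k l.

End Defs.

(* alpha in I_{r,m}: strictly increasing sequence alpha_1 < ... < alpha_r *)
Definition strict_incr (r m : nat) (s : {ffun 'I_r -> 'I_m}) : bool :=
  [forall i : 'I_r, forall j : 'I_r, (i < j)%N ==> (s i < s j)%N].

Definition d_r (C : numClosedFieldType) (r m : nat) (M : 'M[C]_m) : C :=
  \sum_(s : {ffun 'I_r -> 'I_m} | strict_incr s) \det (mxsub s s M).

(* Write G = A A^* = L R with L = col_base G and R = row_base G, and K = R L.
   The Penrose equations give (A^+)^* A^+ G = A A^+ and (A^+)^* A^+ G G = G,
   from which K is invertible and A A^+ = L K^-1 R.  By Cauchy-Binet
   d_r(L R) = det (R L) = det K.  Replacing row j of G = L R by row i amounts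
   to replacing row j of L by row i of L; by Cauchy-Binet again the principal
   minors through j add up to det (R L_i) - det (R L_0), where L_c is L with
   row j replaced by c, and the matrix determinant lemma evaluates this
   difference as det K (L K^-1 R)_ij. *)

From mathcomp Require Import all_boot all_order all_algebra all_fingroup.
From mathcomp Require Import ring.
Set Implicit Arguments. Unset Strict Implicit. Unset Printing Implicit Defensive.
Import GRing.Theory Num.Theory.

Lemma card_ord_ltn k (x : 'I_k) : #|[set t : 'I_k | (t < x)%N]| = x.
Proof.
rewrite cardsE -sum1_card -(big_ord_widen _ (fun=> 1%N) (ltnW (ltn_ord x))).
by rewrite sum1_card card_ord.
Qed.

Section SortFfun.
Variables k m : nat.
Implicit Types (f s : {ffun 'I_k -> 'I_m}) (p : {perm 'I_k}).

Lemma strict_incr_ltn s a b : strict_incr s -> (s a < s b)%N = (a < b)%N.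
Proof.
move=> /forallP incr_s; have lt_s (x y : 'I_k) : (x < y)%N -> (s x < s y)%N.
  by move: (incr_s x) => /forallP /(_ y) /implyP.
case: (ltngtP a b) => [/lt_s -> // | /lt_s lt_ba | /val_inj ->]; last by rewrite ltnn.
by apply/negbTE; rewrite -leqNgt ltnW.
Qed.

Lemma strict_incr_inj s : strict_incr s -> injective s.
Proof.
move=> incr_s a b eq_ab; case: (ltngtP a b) => [|| /val_inj //];
  by rewrite -(strict_incr_ltn _ _ incr_s) eq_ab ltnn.
Qed.

(* For injective [f], [ffun_rank f i] is the position of [f i] among the
   sorted values of [f]; for non-injective [f], [sort_perm f] is junk. *)
Definition ffun_rank f (i : 'I_k) : 'I_k := insubd i #|[set l | (f l < f i)%N]|.

Definition sort_perm f : {perm 'I_k} :=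
  insubd (1%g : {perm 'I_k}) [ffun i => ffun_rank f i].

Definition sort_ffun f : {ffun 'I_k -> 'I_m} := [ffun t => f ((sort_perm f)^-1%g t)].

Definition ffun_perm s p : {ffun 'I_k -> 'I_m} := [ffun i => s (p i)].

Lemma ffun_perm_sort f : ffun_perm (sort_ffun f) (sort_perm f) = f.
Proof. by apply/ffunP => i; rewrite !ffunE permK. Qed.

Lemma ffun_rankE f i : val (ffun_rank f i) = #|[set l | (f l < f i)%N]|.
Proof.
rewrite val_insubd; suff -> : (#|[set l | (f l < f i)%N]| < k)%N by [].
have sub_i : [set l | (f l < f i)%N] \subset [set~ i].
  by apply/subsetP => l; rewrite !inE; apply: contraTneq => ->; rewrite ltnn.
apply: leq_ltn_trans (subset_leq_card sub_i) _.
by rewrite cardsC1 card_ord prednK //; apply: leq_ltn_trans (ltn_ord i).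
Qed.

Section Injective.
Variables (f : {ffun 'I_k -> 'I_m}) (inj_f : injective f).

Lemma ltn_ffun_rank a b : (ffun_rank f a < ffun_rank f b)%N = (f a < f b)%N.
Proof.
have mono (x y : 'I_k) : (f x < f y)%N -> (ffun_rank f x < ffun_rank f y)%N.
  move=> lt_xy; rewrite !ffun_rankE; apply: proper_card; apply/properP; split.
    by apply/subsetP => l; rewrite !inE => /ltn_trans; apply.
  by exists x; rewrite !inE ?ltnn.
case: (ltngtP (f a) (f b)) => [/mono // | /mono lt_ba | /val_inj/inj_f ->].
  by apply/negbTE; rewrite -leqNgt ltnW.
by rewrite ltnn.
Qed.

Lemma sort_permE i : sort_perm f i = ffun_rank f i.
Proof.
have inj_rank : injective (ffun_rank f).
  move=> a b eq_ab; apply/inj_f/val_inj; case: (ltngtP (f a) (f b)) => [|| //];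
  by rewrite -ltn_ffun_rank eq_ab ltnn.
rewrite -pvalE val_insubd.
have -> : injectiveb [ffun i => ffun_rank f i].
  by apply/injectiveP => a b; rewrite !ffunE; apply: inj_rank.
by rewrite ffunE.
Qed.

Lemma sort_ffun_strict : strict_incr (sort_ffun f).
Proof.
apply/forallP => a; apply/forallP => b; apply/implyP => lt_ab.
by rewrite !ffunE -ltn_ffun_rank -!sort_permE !permKV.
Qed.

End Injective.

Section Strict.
Variables (s : {ffun 'I_k -> 'I_m}) (incr_s : strict_incr s).

Lemma ffun_perm_inj p : injective (ffun_perm s p).
Proof. by move=> a b; rewrite !ffunE => /(strict_incr_inj incr_s) /perm_inj. Qed.

Lemma sort_perm_ffun p : sort_perm (ffun_perm s p) = p.
Proof.
apply/permP => i; apply: val_inj.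
rewrite sort_permE ?ffun_rankE; last exact: ffun_perm_inj.
have -> : [set l | (ffun_perm s p l < ffun_perm s p i)%N]
          = p @^-1: [set t : 'I_k | (t < p i)%N].
  by apply/setP => l; rewrite !inE !ffunE strict_incr_ltn.
by rewrite card_preimset ?card_ord_ltn //; apply: perm_inj.
Qed.

Lemma sort_ffun_perm p : sort_ffun (ffun_perm s p) = s.
Proof. by apply/ffunP => t; rewrite !ffunE sort_perm_ffun permKV. Qed.

End Strict.

End SortFfun.

Local Open Scope ring_scope.

Section CauchyBinet.
Variable R : comNzRingType.

Lemma det_mulmx_expand k m (X : 'M[R]_(k, m)) (Y : 'M[R]_(m, k)) :
  \det (X *m Y) =
    \sum_(f : {ffun 'I_k -> 'I_m}) (\prod_i X i (f i)) * \det (rowsub f Y).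
Proof.
transitivity (\sum_(s : 'S_k) \sum_(f : {ffun 'I_k -> 'I_m})
    (-1) ^+ s * ((\prod_i X i (f i)) * \prod_i Y (f i) (s i))).
  apply: eq_bigr => s _; rewrite -big_distrr /=; congr (_ * _).
  under eq_bigr do rewrite mxE.
  by rewrite bigA_distr_bigA; apply: eq_bigr => f _; rewrite big_split.
rewrite exchange_big; apply: eq_bigr => f _ /=; rewrite big_distrr /=.
apply: eq_bigr => s _; rewrite mulrCA; congr (_ * (_ * _)).
by apply: eq_bigr => i _; rewrite mxE.
Qed.

Lemma cauchy_binet k m (X : 'M[R]_(k, m)) (Y : 'M[R]_(m, k)) :
  \det (X *m Y) =
    \sum_(s : {ffun 'I_k -> 'I_m} | strict_incr s) \det (colsub s X) * \det (rowsub s Y).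
Proof.
rewrite det_mulmx_expand (bigID (fun f : {ffun 'I_k -> 'I_m} => injectiveb f)) /=.
rewrite [X in _ + X]big1 ?addr0; last first.
  move=> f /injectivePn [i1 [i2 neq_i12 eq_f12]].
  by rewrite (determinant_alternate neq_i12) ?mulr0 // => j; rewrite !mxE eq_f12.
rewrite (reindex_onto (fun sp => ffun_perm sp.1 sp.2)
                      (fun f => (sort_ffun f, sort_perm f))) /=;
  last by move=> f _; apply: ffun_perm_sort.
rewrite (eq_bigl (fun sp => strict_incr sp.1 && true)); last first.
  move=> [s p] /=; rewrite andbT; apply/idP/idP.
    by move=> /andP[/injectiveP inj_sp /eqP [<- _]]; apply: sort_ffun_strict.
  move=> incr_s; rewrite sort_ffun_perm // sort_perm_ffun // eqxx andbT.
  by apply/injectiveP; apply: ffun_perm_inj.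
rewrite -(pair_big_dep (fun s => strict_incr s) (fun _ _ => true)
  (fun s p => (\prod_i X i (ffun_perm s p i)) * \det (rowsub (ffun_perm s p) Y))) /=.
apply: eq_bigr => s incr_s; rewrite /(determinant (colsub s X)) big_distrl /=.
apply: eq_bigr => p _.
have -> : rowsub (ffun_perm s p) Y = perm_mx p *m rowsub s Y.
  by rewrite -row_permE; apply/matrixP => i j; rewrite !mxE ffunE.
rewrite det_mulmx det_perm mulrCA mulrA; congr (_ * _ * _).
by apply: eq_bigr => i _; rewrite !mxE ffunE.
Qed.

End CauchyBinet.

(* Compare the two block factorizations of [[1, v], [-w, 1]]. *)
Lemma det1_addmul (R : comNzRingType) k (w : 'cV[R]_k) (v : 'rV[R]_k) :
  \det (1%:M + w *m v) = 1 + (v *m w) 0 0.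
Proof.
pose M := block_mx (1%:M : 'M[R]_1) v (- w) 1%:M.
have M_lu : M = block_mx 1%:M 0 (- w) 1%:M *m block_mx 1%:M v 0 (1%:M + w *m v).
  rewrite mulmx_block /M !mul1mx !mulmx1 !mul0mx !addr0.
  by rewrite mulNmx addrCA addNr addr0.
have M_ul : M = block_mx (1%:M + v *m w) v 0 1%:M *m block_mx 1%:M 0 (- w) 1%:M.
  rewrite mulmx_block /M !mul1mx !mulmx1 !mul0mx !mulmx0 !add0r.
  by rewrite mulmxN addrK.
have := congr1 determinant M_ul; rewrite {1}M_lu !det_mulmx !det_lblock !det_ublock.
by rewrite !det1 !mul1r !mulr1 det_mx11 !mxE eqxx mulr1n => ->.
Qed.

Lemma det_addmul (R : comUnitRingType) k (K : 'M[R]_k) (u : 'cV_k) (v : 'rV_k) :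
  K \in unitmx -> \det (K + u *m v) = \det K * (1 + (v *m invmx K *m u) 0 0).
Proof.
move=> unit_RL; have -> : K + u *m v = K *m (1%:M + (invmx K *m u) *m v).
  by rewrite mulmxDr mulmx1 !mulmxA mulmxV // mul1mx.
by rewrite det_mulmx det1_addmul mulmxA.
Qed.

Section RowReplacement.
Variable C : numClosedFieldType.

Lemma mulmx_row_repl k m (X : 'M[C]_(k, m)) (Y : 'M[C]_(m, k)) j c :
  X *m row_repl Y j c = X *m Y + col j X *m (c - row j Y).
Proof.
apply/matrixP => p q; rewrite !mxE big_ord1 !mxE.
rewrite (bigD1 j) //= [in RHS](bigD1 j) //= !mxE eqxx.
under eq_bigr => t /negbTE neq_tj do rewrite mxE neq_tj.
by rewrite [ord0]/(0 : 'I_1); ring.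
Qed.

Lemma row_repl_mulmx k m (Y : 'M[C]_(m, k)) (X : 'M[C]_(k, m)) j c :
  row_repl Y j c *m X = row_repl (Y *m X) j (c *m X).
Proof.
apply/matrixP => p q; rewrite !mxE; case: (p =P j) => [->|neq_pj];
  by apply: eq_bigr => t _; rewrite mxE ?eqxx //; case: eqP.
Qed.

(* Minors avoiding row [j] do not see the replaced row, and for [c = 0] the
   minors through row [j] vanish. *)
Lemma sum_minors_row_repl_codom k m (X : 'M[C]_(k, m)) (Y : 'M[C]_(m, k)) j c :
  \sum_(s : {ffun 'I_k -> 'I_m} | strict_incr s && (j \in codom s))
      \det (colsub s X) * \det (rowsub s (row_repl Y j c))
    = \det (X *m row_repl Y j c) - \det (X *m row_repl Y j 0).
Proof.
pose in_s (s : {ffun 'I_k -> 'I_m}) := j \in codom s.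
rewrite !cauchy_binet [in RHS](bigID in_s) [X in _ - X](bigID in_s) /=.
rewrite [X in _ - (X + _)]big1 ?add0r; last first.
  move=> s /andP[_ /codomP [t ->]].
  rewrite [\det (rowsub _ _)](expand_det_row _ t) big1 ?mulr0 //.
  by move=> l _; rewrite !mxE eqxx mul0r.
suff -> : \sum_(s | strict_incr s && ~~ in_s s)
      \det (colsub s X) * \det (rowsub s (row_repl Y j 0))
    = \sum_(s | strict_incr s && ~~ in_s s)
      \det (colsub s X) * \det (rowsub s (row_repl Y j c)) by rewrite addrK.
apply: eq_bigr => s /andP[_ j_notin_s]; congr (_ * \det _).
apply/matrixP => p q; rewrite !mxE; case: eqP => // eq_sp.
by case/negP: j_notin_s; rewrite /in_s -eq_sp codom_f.
Qed.

Lemma det_mulmx_row_repl k m (X : 'M[C]_(k, m)) (Y : 'M[C]_(m, k)) j c :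
  X *m Y \in unitmx -> \det (X *m row_repl Y j c)
    = \det (X *m Y) * (1 + ((c - row j Y) *m invmx (X *m Y) *m col j X) 0 0).
Proof. by move=> unit_XY; rewrite mulmx_row_repl det_addmul. Qed.

Lemma d_r_mulmx k m (Y : 'M[C]_(m, k)) (X : 'M[C]_(k, m)) :
  d_r k (Y *m X) = \det (X *m Y).
Proof.
rewrite /d_r cauchy_binet; apply: eq_bigr => s _.
by rewrite mxsub_mul det_mulmx mulrC.
Qed.

Lemma sum_minors_row_repl_mulmx k m (Y : 'M[C]_(m, k)) (X : 'M[C]_(k, m)) i j :
  X *m Y \in unitmx ->
  \sum_(s : {ffun 'I_k -> 'I_m} | strict_incr s && (j \in codom s))
     \det (mxsub s s (row_repl (Y *m X) j (row i (Y *m X))))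
  = \det (X *m Y) * (Y *m invmx (X *m Y) *m X) i j.
Proof.
move=> unit_XY.
under eq_bigr do rewrite row_mul -row_repl_mulmx mxsub_mul det_mulmx mulrC.
rewrite sum_minors_row_repl_codom !det_mulmx_row_repl // -mulrBr; congr (_ * _).
have entry i' (M : 'M_(m, k)) : (row i' M *m col j X) 0 0 = (M *m X) i' j.
  by rewrite !mxE; apply: eq_bigr => l _; rewrite !mxE.
have entryB (M N : 'M[C]_1) : (M - N) 0 0 = M 0 0 - N 0 0 by rewrite !mxE.
have entryN (M : 'M[C]_1) : (- M) 0 0 = - M 0 0 by rewrite mxE.
rewrite sub0r !mulmxBl !mulNmx entryB entryN.
by rewrite -![row _ Y *m invmx _]row_mul !entry; ring.
Qed.

End RowReplacement.

Section BaseFactorization.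
Variables (F : fieldType) (m : nat) (Y G : 'M[F]_m).
Hypothesis YGG : Y *m G *m G = G.

Local Notation L := (col_base G).
Local Notation R := (row_base G).

Lemma mulmx_col_base_fix : Y *m L *m (R *m L) = L.
Proof.
apply: (row_free_inj (row_base_free G)).
rewrite -(mulmxA (Y *m L)) -(mulmxA R) mulmx_base mulmxA -(mulmxA Y) mulmx_base.
exact: YGG.
Qed.

Lemma row_base_col_base_unit : R *m L \in unitmx.
Proof.
have [B BL1] := row_fullP (col_base_full G).
have: B *m (Y *m L *m (R *m L)) = 1%:M by rewrite mulmx_col_base_fix.
by rewrite (mulmxA B) => /mulmx1_unit [_ ->].
Qed.

Lemma mulmxE_base_inv : Y *m G = L *m invmx (R *m L) *m R.
Proof.
by rewrite -{1}mulmx_col_base_fix mulmxK ?row_base_col_base_unit // -mulmxA mulmx_base.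
Qed.

End BaseFactorization.

Lemma conjT_mul (C : numClosedFieldType) m n p (A : 'M[C]_(m, n)) (B : 'M[C]_(n, p)) :
  conjT (A *m B) = conjT B *m conjT A.
Proof. by rewrite /conjT map_mxM trmx_mul. Qed.

Section MoorePenrose.
Variables (C : numClosedFieldType) (m n : nat) (A : 'M[C]_(m, n)) (X : 'M[C]_(n, m)).
Hypothesis MP_X : is_MP_inverse A X.

Lemma MP_proj_gram_fix : A *m X *m (A *m conjT A) = A *m conjT A.
Proof. by case: MP_X => AXA _ _ _; rewrite mulmxA AXA. Qed.

Lemma MP_projE : conjT X *m X *m (A *m conjT A) = A *m X.
Proof.
case: MP_X => AXA _ hermAX hermXA.
by rewrite -mulmxA (mulmxA X) -hermXA -!conjT_mul mulmxA AXA hermAX.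
Qed.

Lemma mxrank_gram : \rank (A *m conjT A) = \rank A.
Proof.
apply/eqP; rewrite eqn_leq mxrankM_maxl /=.
case: MP_X => AXA _ _ _; rewrite -{1}AXA -MP_projE -mulmxA.
exact: leq_trans (mxrankM_maxr _ _) (mxrankM_maxl _ _).
Qed.

End MoorePenrose.

Theorem corollary2p3 (C : numClosedFieldType) (m n r : nat)
  (A : 'M[C]_(m, n)) (Aplus : 'M[C]_(n, m)) :
  \rank A = r ->
  ((r < minn m n)%N \/ (r = n /\ (n < m)%N)) ->
  is_MP_inverse A Aplus ->
  forall i j : 'I_m,
    (A *m Aplus) i j =
      (\sum_(s : {ffun 'I_r -> 'I_m} | strict_incr s && (j \in codom s))
          \det (mxsub s s (row_repl (A *m conjT A) j (row i (A *m conjT A)))))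
      / d_r r (A *m conjT A).
Proof.
move=> rankA _ MP_Aplus i j.
rewrite -(mxrank_gram MP_Aplus) in rankA; subst r.
set G := A *m conjT A; set Y := conjT Aplus *m Aplus.
have YGG : Y *m G *m G = G by rewrite MP_projE // MP_proj_gram_fix.
have unit_RL := row_base_col_base_unit YGG.
have := sum_minors_row_repl_mulmx i j unit_RL; rewrite mulmx_base => ->.
have := d_r_mulmx (col_base G) (row_base G); rewrite mulmx_base => ->.
rewrite -(MP_projE MP_Aplus) (mulmxE_base_inv YGG) mulrC mulKf //.
by rewrite -unitfE -unitmxE.
Qed.
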